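(* The relation $\mathrm{Step}^{(d)}\cup\mathrm{Step}^{(p)}$ is well-founded: there is no infinite sequence of configurations $\gamma_0,\gamma_1,\dots$ such that each $\gamma_i\to\gamma_{i+1}$ is a d-step or a par-step.
   Context: Let $G$ be a finite, connected, undirected graph with node set $V$ and a distinguished node $r$ (the root). Each node $p$ has a fixed ordered list $N(p)$ of its neighbours. A configuration $\gamma$ assigns to each node $p$ a value $\gamma.p.d\in\mathbb N$ (unbounded) and a neighbour $\gamma.p.par\in N(p)$. For a non-root node $p$ let $Dist_p(\gamma)=\min\{\gamma.q.d+1 : q\in N(p)\}$. Algorithm BFS (Dolev et al.) has the following actions. Root: enabled iff $\gamma.r.d\neq 0$; executing it sets $r.d:=0$. Non-root $p$, action CD: enabled iff $\gamma.p.d\ne Dist_p(\gamma)$; executing sets $p.d:=Dist_p(\gamma)$. Non-root $p$, action CP: enabled iff $\gamma.p.d=Dist_p(\gamma)$ and $\gamma.q_0.d+1\neq\gamma.p.d$ where $q_0=\gamma.p.par$; executing sets $p.par$ to the first $q$ in $N(p)$ with $\gamma.q.d+1=\gamma.p.d$. A node is enabled if one of its actions is enabled. A step $\gamma\to\gamma'$ (unfair daemon) holds iff there is a nonempty set $S$ of nodes enabled in $\gamma$ such that $\gamma'$ is obtained by every $p\in S$ simultaneously executing its enabled action (evaluated in $\gamma$), all other nodes unchanged. $\mathrm{Step}^{(d)}$ (d-steps): steps with $\gamma.r.d=\gamma'.r.d$ and $\gamma.p.d\ne\gamma'.p.d$ for some node $p$. $\mathrm{Step}^{(p)}$ (par-steps):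 steps with $\gamma.p.d=\gamma'.p.d$ for all $p$. A relation is well-founded if it admits no infinite forward chain. *)

From mathcomp Require Import all_boot.
Set Implicit Arguments. Unset Strict Implicit. Unset Printing Implicit Defensive.

Record config (V : Type) := Config { cd : V -> nat; cpar : V -> V }.

Section BFS.
Variables (V : finType) (N : V -> seq V) (r : V).

Definition graph_ok : Prop :=
  [/\ forall p, uniq (N p),
      forall p, p \notin N p,
      forall p q, (q \in N p) = (p \in N q)
    & forall p q, connect (fun x y => y \in N x) p q].

Definition valid (g : config V) : Prop := forall p, cpar g p \in N p.

(* Dist_p(g) = min { g.q.d + 1 : q in N(p) } (N p is nonempty for p <> r
   in a connected graph with at least two nodes). *)
Definition Dist (g : config V) (p : V) : nat :=
  let vals := [seq cd g q + 1 | q <- N p] in foldr minn (head 0 vals) vals.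

Definition firstpar (g : config V) (p : V) : V :=
  nth p (N p) (find (fun q => cd g q + 1 == cd g p) (N p)).

Definition root_enabled (g : config V) : bool := cd g r != 0.
Definition CD_enabled (g : config V) (p : V) : bool := cd g p != Dist g p.
Definition CP_enabled (g : config V) (p : V) : bool :=
  (cd g p == Dist g p) && (cd g (cpar g p) + 1 != cd g p).

Definition enabled (g : config V) (p : V) : bool :=
  if p == r then root_enabled g else CD_enabled g p || CP_enabled g p.

Definition new_d (g : config V) (p : V) : nat :=
  if p == r then 0
  else if CD_enabled g p then Dist g p else cd g p.
Definition new_par (g : config V) (p : V) : V :=
  if p == r then cpar g p
  else if CD_enabled g p then cpar g p
  else if CP_enabled g p then firstpar g p else cpar g p.

Definition step (g g' : config V) : Prop :=
  exists S : {set V},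
    [/\ S != set0,
        forall p, p \in S -> enabled g p
      & forall p,
          (cd g' p = if p \in S then new_d g p else cd g p) /\
          (cpar g' p = if p \in S then new_par g p else cpar g p)].

Definition dstep (g g' : config V) : Prop :=
  step g g' /\ cd g r = cd g' r /\ exists p, cd g p <> cd g' p.

Definition parstep (g g' : config V) : Prop :=
  step g g' /\ forall p, cd g p = cd g' p.

End BFS.

From mathcomp Require Import all_boot zify.
From Stdlib Require Import Classical.
Set Implicit Arguments. Unset Strict Implicit. Unset Printing Implicit Defensive.

(* Along d-steps and par-steps the root keeps its value and every other node
   either keeps its value or takes its current Dist.  By induction on k there is
   a time after which the values below k are frozen and no value drops below k:
   from then on a node has value k either eventually forever or never again,
   according to whether it has a neighbour frozen at k - 1.  Values are bounded
   by the initial maximum plus the distance to the root, so all of them freeze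
   eventually.  After that every step is a par-step in which each executed node
   repairs its parent pointer and no other pointer changes, so the number of
   wrong parent pointers would decrease forever. *)

Lemma foldr_minn_le (s : seq nat) x y : y \in s -> foldr minn x s <= y.
Proof.
elim: s => //= a s IH; rewrite in_cons => /orP [/eqP<-|/IH H].
  exact: geq_minl.
exact: leq_trans (geq_minr _ _) H.
Qed.

Lemma foldr_minn_mem (s : seq nat) x : foldr minn x s \in x :: s.
Proof.
elim: s => /= [|a s IH]; first by rewrite inE.
rewrite /minn; case: ifP => _; first by rewrite !inE eqxx orbT.
by move: IH; rewrite !inE => /orP [->|->]; rewrite ?orbT.
Qed.

Lemma eventually_constant_of_monotone (f : nat -> bool) t0 :
  (forall t, t0 <= t -> f t -> f t.+1) ->
  exists2 tp, t0 <= tp & forall t, tp <= t -> f t = f tp.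
Proof.
move=> f_mono.
case: (classic (exists2 t, t0 <= t & f t)) => [[tp le_t0p ftp]|no_true].
  exists tp => // t; elim: t => [|t IH]; first by rewrite leqn0 => /eqP ->.
  rewrite leq_eqVlt => /orP [/eqP ->//|le_pt].
  by rewrite f_mono ?IH // (leq_trans le_t0p).
have f_false u : t0 <= u -> f u = false.
  by move=> le_t0u; apply/negP => fu; apply: no_true; exists u.
by exists t0 => // t le_t0t; rewrite !f_false.
Qed.

Lemma minn_succ_eq a b k :
  minn a k = minn b k -> (a == k) = (b == k) -> minn a k.+1 = minn b k.+1.
Proof. by move=> min_eq; case: eqP => [->|a_k]; case: eqP => // b_k _; lia. Qed.

Lemma not_eventually_decreasing (f : nat -> nat) t0 :
  ~ (forall t, t0 <= t -> f t.+1 < f t).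
Proof.
move=> f_dec; suff bound n : f (t0 + n) + n <= f t0 by have := bound (f t0).+1; lia.
elim: n => [|n IH]; first by rewrite !addn0.
have : f (t0 + n.+1) < f (t0 + n) by rewrite addnS; apply/f_dec/leq_addr.
lia.
Qed.

Section BFS.
Variables (V : finType) (N : V -> seq V) (r : V).

Lemma Dist_le g p q : q \in N p -> Dist N g p <= cd g q + 1.
Proof. by move=> Nq; apply/foldr_minn_le/(map_f (fun q => cd g q + 1) Nq). Qed.

Lemma Dist_attained g p : N p != [::] -> exists2 q, q \in N p & cd g q + 1 = Dist N g p.
Proof.
rewrite /Dist; case: (N p) => [//|a s] _ /=.
have := foldr_minn_mem [seq cd g q + 1 | q <- a :: s] (cd g a + 1).
rewrite /= !in_cons orbA orbb => /orP [/eqP ->|/mapP [q Nq ->]].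
  by exists a; rewrite ?inE ?eqxx.
by exists q; rewrite // inE Nq orbT.
Qed.

Lemma firstpar_attains g p :
  N p != [::] -> cd g p = Dist N g p -> cd g (firstpar N g p) + 1 = cd g p.
Proof.
move=> Np_ne d_eq; have [q Nq q_eq] := Dist_attained g Np_ne.
have has_q : has (fun q => cd g q + 1 == cd g p) (N p).
  by apply/hasP; exists q; rewrite // d_eq q_eq.
exact/eqP/(nth_find p has_q).
Qed.

Lemma step_update_d g g' p : step N r g g' -> cd g' r = cd g r ->
  cd g' p = cd g p \/ p != r /\ cd g' p = Dist N g p.
Proof.
move=> [S [_ _ upd]] root_fixed; case: (eqVneq p r) => [->|p_r]; first by left.
case: (upd p) => -> _; case: (p \in S); last by left.
by rewrite /new_d (negbTE p_r); case: ifP; [right | left].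
Qed.

Hypothesis connected_to_root : forall p, connect (fun x y => y \in N x) p r.

Lemma neighbours_nonempty p : p != r -> N p != [::].
Proof.
move=> p_r; case/connectP: (connected_to_root p) => [[|q s]] /=.
  by move=> _ p_eq; rewrite p_eq eqxx in p_r.
by case/andP; case: (N p).
Qed.

Definition wrong_par (g : config V) : {set V} :=
  [set p | cd g (cpar g p) + 1 != cd g p].

Lemma executed_node_repaired g g' (S : {set V}) p :
  (forall p, p \in S -> enabled N r g p) ->
  (forall p, (cd g' p = if p \in S then new_d N r g p else cd g p) /\
             (cpar g' p = if p \in S then new_par N r g p else cpar g p)) ->
  (forall p, cd g' p = cd g p) ->
  p \in S -> p \in wrong_par g /\ p \notin wrong_par g'.
Proof.
move=> S_enabled upd d_fixed pS; have := S_enabled p pS.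
case: (upd p); rewrite pS d_fixed /enabled /new_d /new_par.
case: eqP => [-> d_r _|/eqP p_r]; first by rewrite /root_enabled d_r.
rewrite /CD_enabled; case: eqP => //= d_eq _ par_eq CP.
rewrite !inE par_eq CP !d_fixed firstpar_attains ?neighbours_nonempty ?eqxx //.
by case/andP: CP.
Qed.

Lemma step_fixing_d_shrinks_wrong_par g g' :
  step N r g g' -> (forall p, cd g' p = cd g p) -> #|wrong_par g'| < #|wrong_par g|.
Proof.
move=> [S [S_ne S_enabled upd]] d_fixed.
have repaired := executed_node_repaired S_enabled upd d_fixed.
apply/proper_card/properP; split.
  apply/subsetP => p; case pS: (p \in S); first by case: (repaired p pS).
  by case: (upd p) => _; rewrite pS !inE !d_fixed => ->.
by case/set0Pn: S_ne => p pS; case: (repaired p pS); exists p.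
Qed.

End BFS.

Section Stabilization.
Variables (V : finType) (N : V -> seq V) (r : V).
Hypothesis connected_to_root : forall p, connect (fun x y => y \in N x) p r.
Variable gam : nat -> config V.
Hypothesis d_update : forall t p,
  cd (gam t.+1) p = cd (gam t) p \/ p != r /\ cd (gam t.+1) p = Dist N (gam t) p.

Local Notation d t p := (cd (gam t) p).

Lemma d_bounded_by_path t s p : path (fun x y => y \in N x) p s -> last p s = r ->
  d t p <= \max_q d 0 q + size s.
Proof.
elim: t s p => [|t IH] s p p_path p_last.
  exact: leq_trans (leq_bigmax p) (leq_addr _ _).
case: (d_update t p) => [->|[p_r ->]]; first exact: IH.
case: s p_path p_last => [_ /= p_eq|q s /= /andP [Nq q_path] q_last].
  by rewrite p_eq eqxx in p_r.
by have := IH s q q_path q_last; have := Dist_le (gam t) Nq; lia.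
Qed.

Lemma d_bounded p : exists K, forall t, d t p <= K.
Proof.
case/connectP: (connected_to_root p) => s p_path p_last.
by exists (\max_q d 0 q + size s) => t; apply: d_bounded_by_path; rewrite -?p_last.
Qed.

Definition frozen_below k t0 :=
  forall t p, t0 <= t -> minn (d t p) k = minn (d t0 p) k.

Lemma frozen_below_no_entry k t0 t p :
  frozen_below k t0 -> t0 <= t -> k <= d t p -> k <= d t.+1 p.
Proof.
move=> frozen le_t0t; have := frozen t p le_t0t.
by have := frozen t.+1 p (leqW le_t0t); lia.
Qed.

Lemma level_eventually_constant k t0 p : frozen_below k t0 ->
  exists2 tp, t0 <= tp & forall t, tp <= t -> (d t p == k) = (d tp p == k).
Proof.
move=> frozen.
have frozen_lt t q : t0 <= t -> d t q < k \/ d t0 q < k -> d t q = d t0 q.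
  by move=> le_t0t; have := frozen t q le_t0t; lia.
case: (boolP (has (fun q => d t0 q + 1 == k) (N p))) => [/hasP [q Nq /eqP q_k]|no_q].
  apply: (eventually_constant_of_monotone (f := fun t => d t p == k)) => t le_t0t /eqP p_k.
  have q_t : d t q = d t0 q by apply: frozen_lt; lia.
  have : k <= d t.+1 p by apply: frozen_below_no_entry frozen le_t0t _; rewrite p_k.
  have := Dist_le (gam t) Nq.
  by case: (d_update t p) => [->|[_ ->]] *; apply/eqP; lia.
have [tp le_t0p tp_const] : exists2 tp, t0 <= tp &
    forall t, tp <= t -> (d t p != k) = (d tp p != k).
  apply: (eventually_constant_of_monotone (f := fun t => d t p != k)) => t le_t0t p_k.
  case: (d_update t p) => [->//|[p_r ->]]; apply/eqP => Dist_k.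
  have [q Nq q_eq] := Dist_attained (gam t) (neighbours_nonempty connected_to_root p_r).
  have q_t : d t q = d t0 q by apply: frozen_lt; rewrite // -Dist_k -q_eq addn1; left.
  by move/hasP: no_q; apply; exists q; rewrite // -q_t q_eq Dist_k.
by exists tp => // t le_pt; apply/negb_inj/tp_const.
Qed.

Lemma frozen_below_succ k t0 : frozen_below k t0 -> exists t1, frozen_below k.+1 t1.
Proof.
move=> frozen.
have /fin_all_exists2 [tp le_t0p tp_const] := (fun p => level_eventually_constant p frozen).
pose t1 := maxn t0 (\max_p tp p).
have le_t0t1 : t0 <= t1 := leq_maxl _ _.
have le_tpt1 p : tp p <= t1 by rewrite leq_max (leq_bigmax (F := tp) p) orbT.
exists t1 => t p le_t1t; apply: minn_succ_eq.
  by rewrite (frozen t p) ?(frozen t1 p) // (leq_trans le_t0t1).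
by rewrite (tp_const p t) ?(tp_const p t1) // (leq_trans (le_tpt1 p)).
Qed.

Lemma eventually_frozen_below k : exists t0, frozen_below k t0.
Proof.
elim: k => [|k [t0 frozen]]; last exact: frozen_below_succ frozen.
by exists 0 => t p _; rewrite !minn0.
Qed.

Lemma d_eventually_constant : exists t1, forall t p, t1 <= t -> d t p = d t1 p.
Proof.
have /fin_all_exists [K d_le_K] := d_bounded.
have [t1 frozen] := eventually_frozen_below (\max_p K p).+1.
exists t1 => t p le_t1t; have := frozen t p le_t1t.
by have := d_le_K p t; have := d_le_K p t1; have := leq_bigmax (F := K) p; lia.
Qed.

End Stabilization.

Theorem lemma2 (V : finType) (N : V -> seq V) (r : V) :
  graph_ok N ->
  ~ (exists gam : nat -> config V,
        (forall i, valid N (gam i)) /\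
        (forall i, dstep N r (gam i) (gam i.+1) \/ parstep N r (gam i) (gam i.+1))).
Proof.
move=> [_ _ _ connected] [gam [_ steps]].
have is_step i : step N r (gam i) (gam i.+1) by case: (steps i) => [[]|[]].
have root_fixed i : cd (gam i.+1) r = cd (gam i) r.
  by case: (steps i) => [[_ [->]]|[_ ->]].
have d_update i p := step_update_d p (is_step i) (root_fixed i).
have [t1 d_const] := d_eventually_constant (connected^~ r) d_update.
apply: (not_eventually_decreasing (f := fun t => #|wrong_par (gam t)|) (t0 := t1)).
move=> t le_t1t.
apply: (step_fixing_d_shrinks_wrong_par (connected^~ r) (is_step t)) => p.
by rewrite (d_const t.+1) ?(d_const t) // leqW.
Qed.
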